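(* Let $(P,\le,A_1\ldots A_k)$ be a regular poset with node tree $(\mathcal{N},\prec)$, and suppose $M$ is a descendant of $N$ in $(\mathcal{N},\prec)$. Then (1) $\mathrm{width}(M)\le\mathrm{width}(N)$; (2) if $\mathrm{width}(M)=\mathrm{width}(N)$, then $\mathrm{surplus}(M)\le\mathrm{surplus}(N)$.
   Context: Let $(P,\le)$ be a finite poset of width $w$. For $A\subseteq P$ let $A{\uparrow}=\{y: x\le y\text{ for some }x\in A\}$, $A{\downarrow}=\{y: y\le x\text{ for some }x\in A\}$. For maximal antichains $A,B$ write $A\sqsubseteq B$ if $A\subseteq B{\downarrow}$, and $A\sqsubset B$ if also $A\ne B$. For disjoint antichains $A\sqsubset B$, $(A,B,<)$ is the bipartite graph with classes $A,B$ and edges $(a<b)$ for $a\in A,b\in B$, $a<b$; it is regular if every edge lies in a perfect matching. A regular poset $(P,\le,A_1\ldots A_k)$: $A_1,\dots,A_k$ are maximum antichains partitioning $P$, $(\{A_1,\dots,A_k\},\sqsubseteq)$ is a linear order with minimum $A_1$ and maximum $A_2$, $a<b$ for all $a\in A_1,b\in A_2$, and for every $t\in[2,k]$ and every $A_p\sqsubset A_s$ consecutive in $(\{A_1,\dots,A_t\},\sqsubseteq)$ the graph $(A_p,A_s,<)$ is regular. A node is a bipartite graph $(X,Y,<)$ where, for some such consecutive pair $A_p\sqsubset A_s$ (at some stage $t$), $X\subseteq A_p$, $Y\subseteq A_s$ and $X\cup Y$ is the vertex set of a connected component of $(A_p,A_s,<)$. Its width is $\mathrm{width}(N)=|X|=|Y|$;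 $\mathrm{Int}(N)=X{\uparrow}\cap Y{\downarrow}$; its surplus $\mathrm{surplus}(N)$ is the largest $k$ such that $|A{\uparrow}\cap Y|\ge\min\{|A|+k,|Y|\}$ for all non-empty $A\subseteq X$, with $\mathrm{surplus}(N)=\infty$ if $N$ is a complete bipartite graph. Node tree $(\mathcal{N},\prec)$: $\mathcal{N}$ is the set of all nodes; when for $t\ge3$ the antichain $A_t$ is inserted between $A_p\sqsubset A_s$ consecutive at stage $t-1$, each node $M$ of $(A_p,A_t,<)$ or $(A_t,A_s,<)$ is declared a child of the unique node $N$ of $(A_p,A_s,<)$ with $\mathrm{Int}(M)\subset\mathrm{Int}(N)$. This gives a rooted tree with root $(A_1,A_2,<)$; descendants are defined via the child relation. *)

From HB Require Import structures.
From Stdlib Require Import Relation_Operators.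
From mathcomp Require Import all_boot all_order.
Set Implicit Arguments. Unset Strict Implicit. Unset Printing Implicit Defensive.
Import Order.Theory.

Section RegularPosets.
Context {d : Order.disp_t} {T : finPOrderType d}.
Local Open Scope order_scope.

Definition upset (A : {set T}) : {set T} := [set y | [exists x in A, x <= y]].
Definition downset (A : {set T}) : {set T} := [set y | [exists x in A, y <= x]].

Definition antichain (A : {set T}) : bool :=
  [forall x in A, forall y in A, (x <= y) ==> (x == y)].

Definition max_antichain (A : {set T}) : bool :=
  antichain A && [forall B : {set T}, antichain B ==> (#|B| <= #|A|)%N].

Definition sqle (A B : {set T}) : bool := A \subset downset B.
Definition sqlt (A B : {set T}) : bool := sqle A B && (A != B).

Definition is_pm (A B : {set T}) (E : {set T * T}) : bool :=
  [&& [forall e in E, [&& e.1 \in A, e.2 \in B & e.1 < e.2]],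
      [forall a in A, #|[set e in E | e.1 == a]| == 1%N] &
      [forall b in B, #|[set e in E | e.2 == b]| == 1%N]].

Definition regular_bip (A B : {set T}) : Prop :=
  forall a b, a \in A -> b \in B -> a < b -> exists2 E, is_pm A B E & (a, b) \in E.

Definition consecutive (A : nat -> {set T}) (t p s : nat) : Prop :=
  [/\ (1 <= p <= t)%N, (1 <= s <= t)%N, sqlt (A p) (A s) &
      forall q, (1 <= q <= t)%N -> ~ (sqlt (A p) (A q) /\ sqlt (A q) (A s))].

Record regular_poset (k : nat) (A : nat -> {set T}) : Prop := {
  rp_k : (2 <= k)%N;
  rp_max : forall i, (1 <= i <= k)%N -> max_antichain (A i);
  rp_disj : forall i j, (1 <= i <= k)%N -> (1 <= j <= k)%N -> i != j ->
              [disjoint A i & A j];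
  rp_cover : forall x : T, exists2 i, (1 <= i <= k)%N & x \in A i;
  rp_linear : forall i j, (1 <= i <= k)%N -> (1 <= j <= k)%N ->
              sqle (A i) (A j) \/ sqle (A j) (A i);
  rp_min : forall i, (1 <= i <= k)%N -> sqle (A 1%N) (A i);
  rp_maxel : forall i, (1 <= i <= k)%N -> sqle (A i) (A 2%N);
  rp_12 : forall a b, a \in A 1%N -> b \in A 2%N -> a < b;
  rp_reg : forall t p s, (2 <= t <= k)%N -> consecutive A t p s ->
              regular_bip (A p) (A s)
}.

Definition bip_adj (A B : {set T}) : rel T :=
  fun x y => ((x \in A) && (y \in B) && (x < y)) || ((y \in A) && (x \in B) && (y < x)).

Definition is_component (A B C : {set T}) : Prop :=
  exists2 v, v \in A :|: B & C = [set y | connect (bip_adj A B) v y].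

Definition node_of (A B X Y : {set T}) : Prop :=
  [/\ X \subset A, Y \subset B & is_component A B (X :|: Y)].

Definition is_node (k : nat) (A : nat -> {set T}) (N : {set T} * {set T}) : Prop :=
  exists t p s, [/\ (2 <= t <= k)%N, consecutive A t p s & node_of (A p) (A s) N.1 N.2].

Definition node_width (N : {set T} * {set T}) : nat := #|N.1|.

Definition Int (N : {set T} * {set T}) : {set T} := upset N.1 :&: downset N.2.

Definition complete_bip (X Y : {set T}) : bool := [forall x in X, forall y in Y, x < y].

Definition surplus_ok (X Y : {set T}) (k : nat) : bool :=
  [forall B : {set T}, ((B != set0) && (B \subset X)) ==>
     (minn (#|B| + k) #|Y| <= #|upset B :&: Y|)%N].

(* surplus: None stands for infinity (complete bipartite graph); otherwise the
   largest k with surplus_ok (any such k is < |Y|, so the bounded max is the max) *)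
Definition surplus (N : {set T} * {set T}) : option nat :=
  if complete_bip N.1 N.2 then None
  else Some (\max_(j < #|N.2|.+1 | surplus_ok N.1 N.2 j) j)%N.

Definition child (k : nat) (A : nat -> {set T}) (M N : {set T} * {set T}) : Prop :=
  exists t p s, [/\ (3 <= t <= k)%N, consecutive A t.-1 p s,
     sqlt (A p) (A t) /\ sqlt (A t) (A s),
     node_of (A p) (A s) N.1 N.2 /\ Int M \proper Int N &
     node_of (A p) (A t) M.1 M.2 \/ node_of (A t) (A s) M.1 M.2].

Definition descendant (k : nat) (A : nat -> {set T}) : {set T} * {set T} -> {set T} * {set T} -> Prop :=
  clos_trans _ (child k A).

End RegularPosets.

(* order on nat ∪ {∞}, None = ∞ *)
Definition le_ext (a b : option nat) : bool :=
  match a, b with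
  | _, None => true
  | None, Some _ => false
  | Some m, Some n => (m <= n)%N
  end.

From mathcomp Require Import all_boot all_order.
Set Implicit Arguments. Unset Strict Implicit. Unset Printing Implicit Defensive.
Import Order.Theory.

(** Let a child M of N = (X, Y) arise by inserting A_t between consecutive
    A_p ⊏ A_s.  Every element of A_p lies below some element of A_t and every
    element of A_s above one, so Int M ⊆ Int N forces a child in (A_p, A_t, <)
    to have its lower side inside X and a child in (A_t, A_s, <) its upper side
    inside Y.  All three graphs have perfect matchings, so every component is
    balanced, which gives the width inequality.  When the widths agree the
    child shares X (resp. Y) with N.  For B ⊆ X, a perfect matching of
    (A_t, A_s, <) maps the neighbourhood of B in the child injectively into its
    neighbourhood in Y (resp. one of (A_p, A_t, <) maps B onto an equally large
    B' ⊆ W whose neighbourhood in Y lies in that of B), so every surplus bound,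
    and completeness, passes from M to N.  Both conclusions are transitive,
    hence hold for descendants. *)

Section RegularPosetNodes.
Context {d : Order.disp_t} {T : finPOrderType d}.
Local Open Scope order_scope.
Implicit Types (A B C D X Y Z : {set T}).

Lemma antichain_eq A x y : antichain A -> x \in A -> y \in A -> x <= y -> x = y.
Proof.
move=> /forall_inP/(_ x) acA xA yA.
by move/(_ xA)/forall_inP/(_ y yA)/implyP: acA => le_eq /le_eq/eqP.
Qed.

Lemma upset_antichain A X x :
  antichain A -> X \subset A -> x \in A -> (x \in upset X) = (x \in X).
Proof.
move=> acA XA xA; rewrite inE; apply/exists_inP/idP => [[y yX yx]|xX].
  by rewrite -(antichain_eq acA (subsetP XA y yX) xA yx).
by exists x.
Qed.

Lemma downset_antichain A Y y :
  antichain A -> Y \subset A -> y \in A -> (y \in downset Y) = (y \in Y).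
Proof.
move=> acA YA yA; rewrite inE; apply/exists_inP/idP => [[x xY yx]|yY].
  by rewrite (antichain_eq acA yA (subsetP YA x xY) yx).
by exists y.
Qed.

Lemma max_antichain_comparable A x : max_antichain A -> exists2 a, a \in A & a >=< x.
Proof.
move=> /andP[acA /forallP maxA]; apply/exists_inP; apply: contraT.
rewrite negb_exists_in => /forall_inP incomp.
have xA : x \notin A by apply/negP=> /incomp; rewrite comparablexx.
have : antichain (x |: A).
  apply/forall_inP=> y yA; apply/forall_inP=> z zA; apply/implyP.
  move: yA zA; rewrite !inE => /predU1P[-> | yA] /predU1P[-> | zA] yz //.
  - by move: (incomp z zA); rewrite /Order.comparable yz orbT.
  - by move: (incomp y yA); rewrite /Order.comparable yz.
  - by rewrite (antichain_eq acA yA zA yz).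
by move/(implyP (maxA _)); rewrite cardsU1 xA ltnn.
Qed.

Lemma sqle_trans A B C : sqle A B -> sqle B C -> sqle A C.
Proof.
move=> /subsetP AB /subsetP BC; apply/subsetP=> a /AB; rewrite inE => /exists_inP[b /BC].
rewrite !inE => /exists_inP[c cC bc] ab.
by apply/exists_inP; exists c; rewrite ?(le_trans ab bc).
Qed.

Lemma sqle_anti A B : antichain A -> antichain B -> sqle A B -> sqle B A -> A = B.
Proof.
wlog suff: A B / antichain A -> antichain B -> sqle A B -> sqle B A -> A \subset B.
  by move=> sub acA acB AB BA; apply/eqP; rewrite eqEsubset !sub.
move=> acA acB /subsetP AB /subsetP BA; apply/subsetP=> a aA.
move: (AB a aA); rewrite inE => /exists_inP[b bB ab].
move: (BA b bB); rewrite inE => /exists_inP[a' a'A ba'].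
have ea : a = a' := antichain_eq acA aA a'A (le_trans ab ba').
suff -> : a = b by [].
by apply/le_anti; rewrite ab ea ba'.
Qed.

Lemma sqle_lt_trans A B C : antichain B -> antichain C -> sqle A B -> sqlt B C -> sqlt A C.
Proof.
move=> acB acC AB /andP[BC neBC]; rewrite /sqlt (sqle_trans AB BC).
by apply: contraNneq neBC => eqAC; apply/eqP/sqle_anti; rewrite // -eqAC.
Qed.

Lemma sqlt_le_trans A B C : antichain A -> antichain B -> sqlt A B -> sqle B C -> sqlt A C.
Proof.
move=> acA acB /andP[AB neAB] BC; rewrite /sqlt (sqle_trans AB BC).
by apply: contraNneq neAB => eqAC; apply/eqP/sqle_anti; rewrite // eqAC.
Qed.

Lemma lt_of_le_disjoint A B a b : [disjoint A & B] -> a \in A -> b \in B -> a <= b -> a < b.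
Proof.
move=> dAB aA bB ab; rewrite lt_neqAle ab andbT.
by apply: contraTneq bB => <-; rewrite (disjointFr dAB aA).
Qed.

Lemma sqle_lt_above A B a : sqle A B -> [disjoint A & B] -> a \in A ->
  exists2 b, b \in B & a < b.
Proof.
move=> /subsetP AB dAB aA; move: (AB a aA); rewrite inE => /exists_inP[b bB ab].
by exists b; rewrite ?(lt_of_le_disjoint dAB aA bB ab).
Qed.

Lemma sqle_lt_below A B b : max_antichain A -> antichain B -> sqle A B ->
  [disjoint A & B] -> b \in B -> exists2 a, a \in A & a < b.
Proof.
move=> maxA acB AB dAB bB; have [a aA] := max_antichain_comparable b maxA.
case/orP=> [ab | ba]; first by exists a; rewrite ?(lt_of_le_disjoint dAB aA bB ab).
have [b' b'B ab'] := sqle_lt_above AB dAB aA.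
have eb : b = b' := antichain_eq acB bB b'B (le_trans ba (ltW ab')).
by rewrite eb (lt_geF ab') in ba.
Qed.

Lemma node_closed_adj A B X Y x y :
  node_of A B X Y -> x \in X :|: Y -> bip_adj A B x y -> y \in X :|: Y.
Proof. by case=> _ _ [v _ ->]; rewrite !inE => vx /connect1; apply: connect_trans. Qed.

Lemma node_closed_up A B X Y x y : [disjoint A & B] -> node_of A B X Y ->
  x \in X -> y \in B -> x < y -> y \in Y.
Proof.
move=> dAB nodeXY xX yB xy; have [XA _ _] := nodeXY.
have xXY : x \in X :|: Y by rewrite inE xX.
have adj : bip_adj A B x y by rewrite /bip_adj (subsetP XA x xX) yB xy.
case/setUP: (node_closed_adj nodeXY xXY adj) => // /(subsetP XA) yA.
by rewrite (disjointFr dAB yA) in yB.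
Qed.

Lemma node_closed_down A B X Y x y : [disjoint A & B] -> node_of A B X Y ->
  y \in Y -> x \in A -> x < y -> x \in X.
Proof.
move=> dAB nodeXY yY xA xy; have [_ YB _] := nodeXY.
have yXY : y \in X :|: Y by rewrite inE yY orbT.
have adj : bip_adj A B y x by rewrite /bip_adj xA (subsetP YB y yY) xy orbT.
case/setUP: (node_closed_adj nodeXY yXY adj) => // /(subsetP YB).
by rewrite (disjointFr dAB xA).
Qed.

Section PerfectMatching.
Variables (A B : {set T}) (E : {set T * T}).
Hypothesis pmE : is_pm A B E.

Lemma pm_edge e : e \in E -> [/\ e.1 \in A, e.2 \in B & e.1 < e.2].
Proof. by case/and3P: pmE => /forall_inP/(_ e) edgeE _ _ /edgeE/and3P[]. Qed.

Lemma pm_fst_inj : {in E &, injective fst}.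
Proof.
move=> e e' eE e'E ee'; have [eA _ _] := pm_edge eE.
case/and3P: pmE => _ /forall_inP/(_ _ eA)/cards1P[f Ef] _.
have : e \in [set f] by rewrite -Ef inE eE eqxx.
have : e' \in [set f] by rewrite -Ef inE e'E ee' eqxx.
by rewrite !inE => /eqP-> /eqP->.
Qed.

Lemma pm_snd_inj : {in E &, injective snd}.
Proof.
move=> e e' eE e'E ee'; have [_ eB _] := pm_edge eE.
case/and3P: pmE => _ _ /forall_inP/(_ _ eB)/cards1P[f Ef].
have : e \in [set f] by rewrite -Ef inE eE eqxx.
have : e' \in [set f] by rewrite -Ef inE e'E ee' eqxx.
by rewrite !inE => /eqP-> /eqP->.
Qed.

Lemma pm_fst_onto a : a \in A -> exists2 e, e \in E & e.1 = a.
Proof.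
move=> aA; case/and3P: pmE => _ /forall_inP/(_ a aA)/cards1P[e Ee] _.
by have := set11 e; rewrite -Ee inE => /andP[eE /eqP]; exists e.
Qed.

Lemma pm_snd_onto b : b \in B -> exists2 e, e \in E & e.2 = b.
Proof.
move=> bB; case/and3P: pmE => _ _ /forall_inP/(_ b bB)/cards1P[e Ee].
by have := set11 e; rewrite -Ee inE => /andP[eE /eqP]; exists e.
Qed.

Lemma pm_card_le_fst C D : C \subset A -> {in E, forall e, e.1 \in C -> e.2 \in D} ->
  (#|C| <= #|D|)%N.
Proof.
move=> CA CD; set S := [set e in E | e.1 \in C].
have CS : C \subset fst @: S.
  apply/subsetP=> a aC; have [e eE ea] := pm_fst_onto (subsetP CA a aC).
  by rewrite -ea imset_f // inE eE ea.
have SD : snd @: S \subset D.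
  by apply/subsetP=> _ /imsetP[e /[!inE] /andP[eE eC] ->]; apply: CD.
have injS : {in S &, injective snd}.
  by move=> e e' /[!inE] /andP[eE _] /andP[e'E _]; apply: pm_snd_inj.
apply: leq_trans (subset_leq_card CS) _; apply: leq_trans (leq_imset_card _ _) _.
by rewrite -(card_in_imset injS) subset_leq_card.
Qed.

Lemma pm_card_le_snd C D : C \subset B -> {in E, forall e, e.2 \in C -> e.1 \in D} ->
  (#|C| <= #|D|)%N.
Proof.
move=> CB CD; set S := [set e in E | e.2 \in C].
have CS : C \subset snd @: S.
  apply/subsetP=> b bC; have [e eE eb] := pm_snd_onto (subsetP CB b bC).
  by rewrite -eb imset_f // inE eE eb.
have SD : fst @: S \subset D.
  by apply/subsetP=> _ /imsetP[e /[!inE] /andP[eE eC] ->]; apply: CD.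
have injS : {in S &, injective fst}.
  by move=> e e' /[!inE] /andP[eE _] /andP[e'E _]; apply: pm_fst_inj.
apply: leq_trans (subset_leq_card CS) _; apply: leq_trans (leq_imset_card _ _) _.
by rewrite -(card_in_imset injS) subset_leq_card.
Qed.

Lemma pm_node_card X Y : [disjoint A & B] -> node_of A B X Y -> #|X| = #|Y|.
Proof.
move=> dAB nodeXY; have [XA YB _] := nodeXY.
apply/eqP; rewrite eqn_leq; apply/andP; split.
  apply: pm_card_le_fst XA _ => e eE eX; have [_ eB lt_e] := pm_edge eE.
  exact: node_closed_up dAB nodeXY eX eB lt_e.
apply: pm_card_le_snd YB _ => e eE eY; have [eA _ lt_e] := pm_edge eE.
exact: node_closed_down dAB nodeXY eY eA lt_e.
Qed.

End PerfectMatching.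

Lemma regular_bip_pm A B (x : T) : max_antichain A -> sqle A B -> [disjoint A & B] ->
  regular_bip A B -> exists E, is_pm A B E.
Proof.
move=> maxA AB dAB regAB; have [a aA _] := max_antichain_comparable x maxA.
have [b bB ab] := sqle_lt_above AB dAB aA.
by have [E pmE _] := regAB a b aA bB ab; exists E.
Qed.

Lemma le_ext_surplus X Y X' Y' : #|Y'| = #|Y| ->
  (complete_bip X' Y' -> complete_bip X Y) ->
  (forall j, surplus_ok X' Y' j -> surplus_ok X Y j) ->
  le_ext (surplus (X', Y')) (surplus (X, Y)).
Proof.
move=> eqY complXY okXY; rewrite /surplus /=.
case cXY: (complete_bip X Y); first by case: (complete_bip X' Y').
case cX'Y': (complete_bip X' Y'); first by rewrite complXY in cXY.
rewrite /= eqY; apply/bigmax_leqP => i /okXY okXYi.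
exact: (@leq_bigmax_cond _ _ val i okXYi).
Qed.

Lemma le_ext_trans : transitive le_ext.
Proof. by move=> [b|] [a|] [c|] //=; apply: leq_trans. Qed.

Section Insertion.
Variables (Ap At As : {set T}) (Ept Ets Eps : {set T * T}).
Hypotheses (maxAp : max_antichain Ap) (maxAt : max_antichain At) (acAs : antichain As).
Hypotheses (Apt : sqle Ap At) (Ats : sqle At As).
Hypotheses (dpt : [disjoint Ap & At]) (dts : [disjoint At & As]) (dps : [disjoint Ap & As]).
Hypotheses (pmpt : is_pm Ap At Ept) (pmts : is_pm At As Ets) (pmps : is_pm Ap As Eps).
Variables X Y : {set T}.
Hypothesis nodeN : node_of Ap As X Y.

Lemma mid_in_left_node Z y c : node_of Ap At X Z -> y \in Y -> c \in At -> c < y -> c \in Z.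
Proof.
move=> nodeM yY cAt cy; have [a aAp ac] := sqle_lt_below maxAp (andP maxAt).1 Apt dpt cAt.
have aX := node_closed_down dps nodeN yY aAp (lt_trans ac cy).
exact: node_closed_up dpt nodeM aX cAt ac.
Qed.

Lemma mid_in_right_node W x c : node_of At As W Y -> x \in X -> c \in At -> x < c -> c \in W.
Proof.
move=> nodeM xX cAt xc; have [y yAs cy] := sqle_lt_above Ats dts cAt.
have yY := node_closed_up dps nodeN xX yAs (lt_trans xc cy).
exact: node_closed_down dts nodeM yY cAt cy.
Qed.

Lemma left_child_sub X' Z : node_of Ap At X' Z -> Int (X', Z) \subset Int (X, Y) ->
  X' \subset X.
Proof.
move=> nodeM /subsetP IntMN; have [X'Ap _ _] := nodeM; have [XAp _ _] := nodeN.
have acAp := (andP maxAp).1.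
apply/subsetP=> x xX'; have xAp := subsetP X'Ap x xX'.
have [c cAt xc] := sqle_lt_above Apt dpt xAp.
have : x \in Int (X', Z).
  rewrite inE (upset_antichain acAp X'Ap xAp) xX' inE.
  by apply/exists_inP; exists c; rewrite ?(node_closed_up dpt nodeM xX' cAt xc) ?ltW.
by move/IntMN; rewrite inE (upset_antichain acAp XAp xAp) => /andP[].
Qed.

Lemma right_child_sub W Y' : node_of At As W Y' -> Int (W, Y') \subset Int (X, Y) ->
  Y' \subset Y.
Proof.
move=> nodeM /subsetP IntMN; have [_ Y'As _] := nodeM; have [_ YAs _] := nodeN.
apply/subsetP=> y yY'; have yAs := subsetP Y'As y yY'.
have [c cAt cy] := sqle_lt_below maxAt acAs Ats dts yAs.
have : y \in Int (W, Y').
  rewrite inE (downset_antichain acAs Y'As yAs) yY' andbT inE.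
  by apply/exists_inP; exists c; rewrite ?(node_closed_down dts nodeM yY' cAt cy) ?ltW.
by move/IntMN; rewrite inE (downset_antichain acAs YAs yAs) => /andP[].
Qed.

Lemma left_child_complete Z : node_of Ap At X Z -> complete_bip X Z -> complete_bip X Y.
Proof.
move=> nodeM /forall_inP complM; apply/forall_inP=> x xX; apply/forall_inP=> y yY.
have [_ YAs _] := nodeN.
have [c cAt cy] := sqle_lt_below maxAt acAs Ats dts (subsetP YAs y yY).
have cZ := mid_in_left_node nodeM yY cAt cy.
by move/forall_inP: (complM x xX) => /(_ c cZ) /lt_trans; apply.
Qed.

Lemma right_child_complete W : node_of At As W Y -> complete_bip W Y -> complete_bip X Y.
Proof.
move=> nodeM /forall_inP complM; apply/forall_inP=> x xX; apply/forall_inP=> y yY.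
have [XAp _ _] := nodeN.
have [c cAt xc] := sqle_lt_above Apt dpt (subsetP XAp x xX).
have cW := mid_in_right_node nodeM xX cAt xc.
by move/forall_inP: (complM c cW) => /(_ y yY); apply: lt_trans.
Qed.

Lemma left_child_surplus_ok Z j : node_of Ap At X Z -> surplus_ok X Z j -> surplus_ok X Y j.
Proof.
move=> nodeM okM; have [_ ZAt _] := nodeM.
have eqZY : #|Z| = #|Y|.
  by rewrite -(pm_node_card pmpt dpt nodeM) (pm_node_card pmps dps nodeN).
apply/forallP=> B; apply/implyP=> /andP[B0 BX].
move/forallP/(_ B): okM; rewrite B0 BX eqZY /= => /leq_trans; apply.
apply: (pm_card_le_fst pmts (subset_trans (subsetIr _ _) ZAt)) => e eE.
have [_ eAs lt_e] := pm_edge pmts eE.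
rewrite !inE => /andP[/exists_inP[b bB be] _]; have be2 := le_lt_trans be lt_e.
rewrite (node_closed_up dps nodeN (subsetP BX b bB) eAs be2) andbT.
by apply/exists_inP; exists b; rewrite ?ltW.
Qed.

Lemma right_child_surplus_ok W j : node_of At As W Y -> surplus_ok W Y j -> surplus_ok X Y j.
Proof.
move=> nodeM okM; have [XAp _ _] := nodeN.
apply/forallP=> B; apply/implyP=> /andP[B0 BX].
set B' := [set e.2 | e in Ept & e.1 \in B].
have BB' : (#|B| <= #|B'|)%N.
  by apply: (pm_card_le_fst pmpt (subset_trans BX XAp)) => e eE eB; rewrite imset_f // inE eE.
have B'W : B' \subset W.
  apply/subsetP=> _ /imsetP[e /[!inE] /andP[eE eB] ->]; have [_ eAt lt_e] := pm_edge pmpt eE.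
  exact: mid_in_right_node nodeM (subsetP BX _ eB) eAt lt_e.
have B'0 : B' != set0 by rewrite -card_gt0 (leq_trans _ BB') // card_gt0.
have upB' : upset B' :&: Y \subset upset B :&: Y.
  apply/subsetP=> y; rewrite !inE => /andP[/exists_inP[_ /imsetP[e /[!inE] eEB ->] ey] ->].
  have [eE eB] := andP eEB.
  have [_ _ lt_e] := pm_edge pmpt eE.
  by rewrite andbT; apply/exists_inP; exists e.1; rewrite ?(le_trans (ltW lt_e) ey).
move/forallP/(_ B'): okM; rewrite B'0 B'W /= => okB'.
apply: leq_trans (subset_leq_card upB'); apply: leq_trans okB'.
by rewrite leq_min !geq_min leq_add2r BB' leqnn orbT.
Qed.

Lemma left_child_mono X' Z : node_of Ap At X' Z -> Int (X', Z) \subset Int (X, Y) ->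
  (#|X'| <= #|X|)%N /\ (#|X'| = #|X| -> le_ext (surplus (X', Z)) (surplus (X, Y))).
Proof.
move=> nodeM IntMN; have X'X := left_child_sub nodeM IntMN.
split=> [|eqX]; first exact: subset_leq_card.
have eX' : X' = X by apply/eqP; rewrite eqEcard X'X eqX /=.
subst X'; apply: le_ext_surplus.
- by rewrite -(pm_node_card pmpt dpt nodeM) (pm_node_card pmps dps nodeN).
- exact: left_child_complete.
- by move=> j; apply: left_child_surplus_ok.
Qed.

Lemma right_child_mono W Y' : node_of At As W Y' -> Int (W, Y') \subset Int (X, Y) ->
  (#|W| <= #|X|)%N /\ (#|W| = #|X| -> le_ext (surplus (W, Y')) (surplus (X, Y))).
Proof.
move=> nodeM IntMN; have Y'Y := right_child_sub nodeM IntMN.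
rewrite (pm_node_card pmts dts nodeM) (pm_node_card pmps dps nodeN).
split=> [|eqY]; first exact: subset_leq_card.
have eY' : Y' = Y by apply/eqP; rewrite eqEcard Y'Y eqY /=.
subst Y'; apply: le_ext_surplus => //.
- exact: right_child_complete.
- by move=> j; apply: right_child_surplus_ok.
Qed.

Lemma inserted_node_mono M : node_of Ap At M.1 M.2 \/ node_of At As M.1 M.2 ->
  Int M \subset Int (X, Y) ->
  (node_width M <= node_width (X, Y))%N /\
  (node_width M = node_width (X, Y) -> le_ext (surplus M) (surplus (X, Y))).
Proof.
by case: M => M1 M2 /= [] nodeM IntMN; [apply: left_child_mono | apply: right_child_mono].
Qed.

End Insertion.

Lemma regular_poset_antichain k (A : nat -> {set T}) i :
  regular_poset k A -> (1 <= i <= k)%N -> antichain (A i).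
Proof. by move=> rp /(rp_max rp)/andP[]. Qed.

Lemma consecutive_insert k (A : nat -> {set T}) t p s :
  regular_poset k A -> (t <= k)%N -> consecutive A t.-1 p s ->
  sqlt (A p) (A t) -> sqlt (A t) (A s) ->
  consecutive A t p t /\ consecutive A t t s.
Proof.
move=> rp tk [/andP[p1 pt] /andP[s1 st] _ no_mid] ltpt ltts.
have ac i : (1 <= i <= t)%N -> antichain (A i).
  by move=> /andP[i1 it]; apply: regular_poset_antichain rp _; rewrite i1 (leq_trans it tk).
have pt' : (1 <= p <= t)%N by rewrite p1 (leq_trans pt (leq_pred t)).
have st' : (1 <= s <= t)%N by rewrite s1 (leq_trans st (leq_pred t)).
have tt : (1 <= t <= t)%N by rewrite leqnn andbT (leq_trans p1 (proj2 (andP pt'))).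
have no_mid' q : (1 <= q <= t)%N -> q != t -> ~ (sqlt (A p) (A q) /\ sqlt (A q) (A s)).
  move=> /andP[q1 qt] qnt; apply: no_mid; rewrite q1 /=.
  by rewrite -ltnS (ltn_predK (leq_trans p1 (proj2 (andP pt')))) ltn_neqAle qnt qt.
(* An antichain strictly inside either gap would already separate A_p from A_s. *)
split; split=> // q q1 [ltpq ltqt]; have [eqt | qnt] := eqVneq q t.
- by rewrite eqt /sqlt eqxx andbF in ltqt.
- exact: (no_mid' q q1 qnt (conj ltpq (sqle_lt_trans (ac t tt) (ac s st') (andP ltqt).1 ltts))).
- by rewrite eqt /sqlt eqxx andbF in ltpq.
- exact: (no_mid' q q1 qnt (conj (sqlt_le_trans (ac p pt') (ac t tt) ltpt (andP ltpq).1) ltqt)).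
Qed.

Lemma child_mono k (A : nat -> {set T}) M N : regular_poset k A -> child k A M N ->
  (node_width M <= node_width N)%N /\
  (node_width M = node_width N -> le_ext (surplus M) (surplus N)).
Proof.
move=> rp [t [p [s [/andP[t3 tk] cons [ltpt ltts] [nodeN /proper_sub IntMN] nodeM]]]].
have [cpt cts] := consecutive_insert rp tk cons ltpt ltts.
have [/andP[p1 pt] /andP[s1 st] ltps _] := cons.
have t2 : (2 <= t <= k)%N by rewrite tk andbT ltnW.
have t2' : (2 <= t.-1 <= k)%N by rewrite -ltnS (ltn_predK t3) t3 (leq_trans (leq_pred t) tk).
have ik i : (i <= t.-1)%N -> (i <= k)%N by move/leq_trans; apply; rewrite (leq_trans (leq_pred t)).
have pk : (1 <= p <= k)%N by rewrite p1 ik.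
have sk : (1 <= s <= k)%N by rewrite s1 ik.
have tk' : (1 <= t <= k)%N by rewrite tk andbT (leq_trans _ t3).
have disj i j : (1 <= i <= k)%N -> (1 <= j <= k)%N -> sqlt (A i) (A j) -> [disjoint A i & A j].
  by move=> ik' jk /andP[_ neij]; apply: (rp_disj rp ik' jk); apply: contraNneq neij => ->.
have [_ _ [v _ _]] := nodeN.
have [Ept pmpt] := regular_bip_pm v (rp_max rp pk) (andP ltpt).1 (disj _ _ pk tk' ltpt)
  (rp_reg rp t2 cpt).
have [Ets pmts] := regular_bip_pm v (rp_max rp tk') (andP ltts).1 (disj _ _ tk' sk ltts)
  (rp_reg rp t2 cts).
have [Eps pmps] := regular_bip_pm v (rp_max rp pk) (andP ltps).1 (disj _ _ pk sk ltps)
  (rp_reg rp t2' cons).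
case: N nodeN IntMN => X Y /= nodeN IntMN.
exact: (inserted_node_mono (rp_max rp pk) (rp_max rp tk') (regular_poset_antichain rp sk)
  (andP ltpt).1 (andP ltts).1 (disj _ _ pk tk' ltpt) (disj _ _ tk' sk ltts) (disj _ _ pk sk ltps)
  pmpt pmts pmps nodeN nodeM IntMN).
Qed.

End RegularPosetNodes.

Theorem proposition10 (d : Order.disp_t) (T : finPOrderType d) (k : nat)
    (A : nat -> {set T}) (M N : {set T} * {set T}) :
  regular_poset k A -> descendant k A M N ->
  (node_width M <= node_width N)%N /\
  (node_width M = node_width N -> le_ext (surplus M) (surplus N)).
Proof.
move=> rp; elim=> [M' N' /(child_mono rp) // | M' N' O _ [wMN sMN] _ [wNO sNO]].
split=> [|eqMO]; first exact: leq_trans wNO.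
have eqMN : node_width M' = node_width N' by apply/eqP; rewrite eqn_leq wMN eqMO wNO.
by apply: le_ext_trans (sMN eqMN) (sNO _); rewrite -eqMN.
Qed.
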